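(* Fix a Bergman tree $\mathcal{T}_n$ with parameter $\lambda>0$. There exists $\varrho>0$ such that for every $\alpha\in\mathcal{T}_n$ with $\alpha\neq o$, $$\bigcup_{\beta\ge\alpha}K_\beta\subseteq V^{\varrho}_{c_\alpha},\qquad\text{where } V^\varrho_z=\Big\{w\in\mathbb{B}_n:\Big|1-w\cdot\tfrac{z}{|z|}\Big|\le\varrho(1-|z|)\Big\}.$$
   Context: Notation: $\mathbb{B}_n$ is the open unit ball of $\mathbb{C}^n$, $z\cdot w=\sum_j z_j\overline{w_j}$. For $z\in\mathbb{B}_n$, $\varphi_z$ is the involutive automorphism of $\mathbb{B}_n$ interchanging $0$ and $z$; the Bergman metric is $d(z,w)=\frac12\log\frac{1+|\varphi_z(w)|}{1-|\varphi_z(w)|}$, and $D(z,r)=\{w:d(z,w)<r\}$. Bergman tree with parameter $\lambda>0$: for $r>0$ let $S_r=\{z:d(0,z)=r\}$ and for $z\neq0$ let $P_rz$ be the point of $S_r$ on the ray $\{tz:t>0\}$. For each integer $N\ge1$ fix points $z^N_1,\dots,z^N_{J_N}\in S_{\lambda N}$ and a partition of $S_{\lambda N}$ into Borel sets $Q^N_1,\dots,Q^N_{J_N}$ with $B_N(z^N_j,\lambda/2)\subseteq Q^N_j\subseteq B_N(z^N_j,2\lambda)$, where $B_N(z,s)=S_{\lambda N}\cap D(z,s)$. Set $K^N_j=\{z:\lambda N\le d(0,z)<\lambda(N+1),\ P_{\lambda N}z\in Q^N_j\}$ with center $c^N_j=P_{\lambda(N+1/2)}z^N_j$; the root is $K_o=\{z:d(0,z)<\lambda\}$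 with center $0$. $\mathcal{T}_n$ is the index set consisting of $o$ and all pairs $\alpha=(N,j)$; write $K_\alpha$, $c_\alpha$ and $d(\alpha)=N$ (with $d(o)=0$). Tree structure: $(N+1,i)$ is a child of $(N,j)$ (for $N\ge1$) if $P_{\lambda N}c^{N+1}_i\in Q^N_j$, and every $(1,j)$ is a child of $o$. Write $\beta\ge\alpha$ if $\beta$ equals $\alpha$ or is a descendant of $\alpha$. *)

From Stdlib Require Import Reals Lra Relations ClassicalEpsilon.
Open Scope R_scope.

Definition C := (R * R)%type.
Definition C0 : C := (0, 0).
Definition C1 : C := (1, 0).
Definition Cadd (a b : C) : C := (fst a + fst b, snd a + snd b).
Definition Copp (a : C) : C := (- fst a, - snd a).
Definition Csub (a b : C) : C := Cadd a (Copp b).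
Definition Cmul (a b : C) : C :=
  (fst a * fst b - snd a * snd b, fst a * snd b + snd a * fst b).
Definition Cconj (a : C) : C := (fst a, - snd a).
Definition Cinv (a : C) : C :=
  (fst a / (fst a ^ 2 + snd a ^ 2), - snd a / (fst a ^ 2 + snd a ^ 2)).
Definition CofR (r : R) : C := (r, 0).
Definition Cmod (a : C) : R := sqrt (fst a ^ 2 + snd a ^ 2).

Fixpoint Csum (n : nat) (f : nat -> C) : C :=
  match n with O => C0 | S m => Cadd (Csum m f) (f m) end.

(* ---------- Vectors of C^n: coordinates 0..n-1 of a map nat -> C ---------- *)
Definition Vec := nat -> C.
Definition vzero : Vec := fun _ => C0.
Definition vadd (u v : Vec) : Vec := fun j => Cadd (u j) (v j).
Definition vsub (u v : Vec) : Vec := fun j => Csub (u j) (v j).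
Definition vscale (c : C) (v : Vec) : Vec := fun j => Cmul c (v j).
Definition vscalR (t : R) (v : Vec) : Vec := vscale (CofR t) v.

Definition inner (n : nat) (z w : Vec) : C :=
  Csum n (fun j => Cmul (z j) (Cconj (w j))).
Definition vnorm (n : nat) (z : Vec) : R := sqrt (fst (inner n z z)).
Definition inBall (n : nat) (z : Vec) : Prop := vnorm n z < 1.

(* Involutive automorphism phi_a (Rudin): P_a z = (z.a / a.a) a,
   Q_a = I - P_a, s_a = sqrt(1-|a|^2),
   phi_a(z) = (a - P_a z - s_a Q_a z) / (1 - z.a);  phi_0 = -id. *)
Definition phi (n : nat) (a z : Vec) : Vec :=
  if Req_EM_T (vnorm n a) 0 then vscale (Copp C1) z
  else
    let Pz := vscale (Cmul (inner n z a) (Cinv (inner n a a))) a in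
    vscale (Cinv (Csub C1 (inner n z a)))
      (vsub (vsub a Pz) (vscalR (sqrt (1 - vnorm n a ^ 2)) (vsub z Pz))).

Definition bdist (n : nat) (z w : Vec) : R :=
  / 2 * ln ((1 + vnorm n (phi n z w)) / (1 - vnorm n (phi n z w))).

Definition sphere (n : nat) (r : R) (z : Vec) : Prop :=
  inBall n z /\ bdist n vzero z = r.

Definition Pr (n : nat) (r : R) (z : Vec) : Vec :=
  epsilon (inhabits vzero)
    (fun p => sphere n r p /\ exists t, 0 < t /\ p = vscalR t z).

Record BergmanTree (n : nat) := {
  lam : R;
  J : nat -> nat;
  zc : nat -> nat -> Vec;
  Qs : nat -> nat -> Vec -> Prop;
  lam_pos : 0 < lam;
  zc_sphere : forall N j, (1 <= N)%nat -> (j < J N)%nat ->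
      sphere n (lam * INR N) (zc N j);
  Q_partition : forall N, (1 <= N)%nat -> forall w,
      sphere n (lam * INR N) w -> exists! j, (j < J N)%nat /\ Qs N j w;
  Q_lower : forall N j, (1 <= N)%nat -> (j < J N)%nat -> forall w,
      sphere n (lam * INR N) w -> bdist n (zc N j) w < lam / 2 -> Qs N j w;
  Q_upper : forall N j, (1 <= N)%nat -> (j < J N)%nat -> forall w,
      Qs N j w -> sphere n (lam * INR N) w /\ bdist n (zc N j) w < 2 * lam
}.
Arguments lam {n}. Arguments J {n}. Arguments zc {n}. Arguments Qs {n}.

Inductive node := Root | Nd (N j : nat).

Definition valid {n} (T : BergmanTree n) (a : node) : Prop :=
  match a with Root => True | Nd N j => (1 <= N)%nat /\ (j < J T N)%nat end.

Definition center {n} (T : BergmanTree n) (a : node) : Vec :=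
  match a with
  | Root => vzero
  | Nd N j => Pr n (lam T * (INR N + / 2)) (zc T N j)
  end.

Definition Kbox {n} (T : BergmanTree n) (a : node) (z : Vec) : Prop :=
  match a with
  | Root => inBall n z /\ bdist n vzero z < lam T
  | Nd N j => inBall n z /\ lam T * INR N <= bdist n vzero z
              /\ bdist n vzero z < lam T * (INR N + 1)
              /\ Qs T N j (Pr n (lam T * INR N) z)
  end.

Definition child {n} (T : BergmanTree n) (b a : node) : Prop :=
  valid T a /\ valid T b /\
  match a, b with
  | Root, Nd N _ => N = 1%nat
  | Nd N j, Nd N' i => N' = S N /\ Qs T N j (Pr n (lam T * INR N) (center T b))
  | _, _ => False
  end.

Definition desc {n} (T : BergmanTree n) (a b : node) : Prop :=
  clos_refl_trans node (fun x y => child T y x) a b.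

Definition Vreg (n : nat) (rho : R) (z w : Vec) : Prop :=
  inBall n w /\
  Cmod (Csub C1 (inner n w (vscalR (/ vnorm n z) z)))
    <= rho * (1 - vnorm n z).

From Pilot Require Import Defs.
From Stdlib Require Import Reals Relations Lra Psatz FunctionalExtensionality ClassicalEpsilon.
Open Scope R_scope.

(** Write dir v = v / |v| and gap(u, v) = |1 - u.v| (the Korányi gap); on the
    unit sphere sqrt(gap) satisfies the triangle inequality (via Cauchy-Schwarz).
    The Bergman sphere S_r is the Euclidean sphere of radius tanh r, and the
    identity |phi_z(y)|^2 |1 - y.z|^2 = |1 - y.z|^2 - (1 - |z|^2)(1 - |y|^2)
    shows that two points of S_r at Bergman distance < 2 lambda have directions
    with gap <= K e^{-2r} ("one step" of the tree).  Chaining the steps along a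
    branch from (N, j) with the triangle inequality for sqrt(gap) gives a
    geometric series, so every w in a box below (N, j) has
    gap(dir z^N_j, dir w) <= K/(1-q)^2 e^{-2 lambda N}, q = e^{-lambda}.
    Finally |1 - w.dir c| <= (1 - |w|) + gap, and both terms are comparable to
    1 - |c| ~ e^{-2 lambda N} for the center c of (N, j). *)

Lemma Cmod_nonneg (a : Defs.C) : 0 <= Cmod a.
Proof. apply sqrt_pos. Qed.

Lemma Cmod_sq (a : Defs.C) : Cmod a ^ 2 = fst a ^ 2 + snd a ^ 2.
Proof. unfold Cmod. rewrite pow2_sqrt; nra. Qed.

Lemma Cmod_le (a : Defs.C) (y : R) :
  0 <= y -> fst a ^ 2 + snd a ^ 2 <= y ^ 2 -> Cmod a <= y.
Proof.
  intros Hy H. unfold Cmod. rewrite <- (sqrt_pow2 y Hy). apply sqrt_le_1; nra.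
Qed.

Lemma Cmod_ge (a : Defs.C) (y : R) :
  0 <= y -> y ^ 2 <= fst a ^ 2 + snd a ^ 2 -> y <= Cmod a.
Proof.
  intros Hy H. unfold Cmod. rewrite <- (sqrt_pow2 y Hy). apply sqrt_le_1; nra.
Qed.

Lemma Cmod_triangle (a b : Defs.C) : Cmod (Cadd a b) <= Cmod a + Cmod b.
Proof.
  destruct a as [a1 a2], b as [b1 b2].
  pose proof (Cmod_sq (a1, a2)) as Ha; pose proof (Cmod_sq (b1, b2)) as Hb.
  pose proof (Cmod_nonneg (a1, a2)); pose proof (Cmod_nonneg (b1, b2)).
  cbn [fst snd] in *.
  set (ma := Cmod (a1, a2)) in *; set (mb := Cmod (b1, b2)) in *.
  assert (Hcs : a1 * b1 + a2 * b2 <= ma * mb).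
  { assert ((a1 * b1 + a2 * b2) ^ 2 <= (ma * mb) ^ 2).
    { replace ((ma * mb) ^ 2) with (ma ^ 2 * mb ^ 2) by ring. rewrite Ha, Hb.
      replace ((a1 ^ 2 + a2 ^ 2) * (b1 ^ 2 + b2 ^ 2))
        with ((a1 * b1 + a2 * b2) ^ 2 + (a1 * b2 - a2 * b1) ^ 2) by ring.
      pose proof (pow2_ge_0 (a1 * b2 - a2 * b1)). lra. }
    assert (0 <= ma * mb) by (apply Rmult_le_pos; assumption). nra. }
  apply Cmod_le; unfold Cadd; cbn [fst snd]; nra.
Qed.

Lemma inner_lin (n : nat) (al be ga de : Defs.C) (a w b x : Vec) :
  inner n (fun j => Cadd (Cmul al (a j)) (Cmul be (w j)))
          (fun j => Cadd (Cmul ga (b j)) (Cmul de (x j)))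
  = Cadd (Cadd (Cmul (Cmul al (Cconj ga)) (inner n a b))
               (Cmul (Cmul al (Cconj de)) (inner n a x)))
         (Cadd (Cmul (Cmul be (Cconj ga)) (inner n w b))
               (Cmul (Cmul be (Cconj de)) (inner n w x))).
Proof.
  unfold inner. induction n as [|n IH]; simpl.
  - destruct al, be, ga, de. unfold C0, Cadd, Cmul, Cconj; simpl. f_equal; ring.
  - rewrite IH.
    destruct (Csum n (fun j => Cmul (a j) (Cconj (b j)))),
             (Csum n (fun j => Cmul (a j) (Cconj (x j)))),
             (Csum n (fun j => Cmul (w j) (Cconj (b j)))),
             (Csum n (fun j => Cmul (w j) (Cconj (x j)))),
             (a n), (w n), (b n), (x n), al, be, ga, de.
    unfold Cadd, Cmul, Cconj; simpl. f_equal; ring.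
Qed.

Lemma inner_scale (n : nat) (al ga : Defs.C) (a b : Vec) :
  inner n (vscale al a) (vscale ga b) = Cmul (Cmul al (Cconj ga)) (inner n a b).
Proof.
  unfold inner, vscale. induction n as [|n IH]; simpl.
  - destruct al, ga. unfold C0, Cmul, Cconj; simpl. f_equal; ring.
  - rewrite IH. destruct (Csum n (fun j => Cmul (a j) (Cconj (b j)))), (a n), (b n), al, ga.
    unfold Cadd, Cmul, Cconj; simpl. f_equal; ring.
Qed.

Lemma inner_scalR_l (n : nat) (t : R) (u v : Vec) :
  inner n (vscalR t u) v = (t * fst (inner n u v), t * snd (inner n u v)).
Proof.
  unfold inner, vscalR, vscale, CofR. induction n as [|n IH]; simpl.
  - unfold C0; f_equal; ring.
  - rewrite IH. destruct (Csum n (fun j => Cmul (u j) (Cconj (v j)))), (u n), (v n).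
    unfold Cadd, Cmul, Cconj; simpl. f_equal; ring.
Qed.

Lemma inner_scalR (n : nat) (s t : R) (u v : Vec) :
  inner n (vscalR s u) (vscalR t v)
  = (s * t * fst (inner n u v), s * t * snd (inner n u v)).
Proof.
  unfold vscalR. rewrite inner_scale. destruct (inner n u v).
  unfold Cmul, Cconj, CofR; cbn [fst snd]. f_equal; ring.
Qed.

Lemma inner_conj (n : nat) (u v : Vec) : inner n v u = Cconj (inner n u v).
Proof.
  unfold inner. induction n as [|n IH]; simpl.
  - unfold C0, Cconj; simpl. f_equal; ring.
  - rewrite IH. destruct (Csum n (fun j => Cmul (u j) (Cconj (v j)))), (u n), (v n).
    unfold Cadd, Cmul, Cconj; simpl. f_equal; ring.
Qed.

Lemma inner_self_real (n : nat) (u : Vec) :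
  snd (inner n u u) = 0 /\ 0 <= fst (inner n u u).
Proof.
  unfold inner. induction n as [|n IH]; simpl. { split; lra. }
  destruct (Csum n (fun j => Cmul (u j) (Cconj (u j)))) as [s1 s2]. simpl in IH.
  destruct (u n). unfold Cadd, Cmul, Cconj; simpl. split; nra.
Qed.

Lemma inner_self (n : nat) (u : Vec) : inner n u u = (fst (inner n u u), 0).
Proof.
  destruct (inner_self_real n u) as [H _]. rewrite <- H. destruct (inner n u u); reflexivity.
Qed.

Lemma inner_self_nonneg (n : nat) (u : Vec) : 0 <= fst (inner n u u).
Proof. apply inner_self_real. Qed.

(* Cauchy-Schwarz, from the nonnegativity of |u - t (u.v) v|^2 in the real t. *)
Lemma cauchy_schwarz (n : nat) (u v : Vec) :
  fst (inner n u v) ^ 2 + snd (inner n u v) ^ 2 <= fst (inner n u u) * fst (inner n v v).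
Proof.
  set (P := fst (inner n u v) ^ 2 + snd (inner n u v) ^ 2).
  assert (Hq : forall t : R,
             0 <= fst (inner n u u) - 2 * t * P + t ^ 2 * P * fst (inner n v v)).
  { intro t.
    pose proof (inner_self_nonneg n (fun j => Cadd (Cmul Defs.C1 (u j))
                 (Cmul (- (t * fst (inner n u v)), - (t * snd (inner n u v))) (v j)))) as H.
    rewrite inner_lin, (inner_conj n u v), (inner_self n u), (inner_self n v) in H.
    unfold P. destruct (inner n u v) as [p1 p2]. simpl in *.
    unfold Cadd, Cmul, Cconj, Defs.C1 in H; simpl in H. nra. }
  pose proof (inner_self_nonneg n u); pose proof (inner_self_nonneg n v).
  set (A := fst (inner n u u)) in *; set (B := fst (inner n v v)) in *.
  assert (HP : 0 <= P) by (unfold P; nra).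
  destruct (Req_dec P 0) as [HP0|HP0]; [rewrite HP0; nra|].
  destruct (Req_dec B 0) as [HB|HB].
  - specialize (Hq ((A + 1) / (2 * P))). rewrite HB in Hq.
    replace (A - 2 * ((A + 1) / (2 * P)) * P + ((A + 1) / (2 * P)) ^ 2 * P * 0)
      with (-1) in Hq by (field; lra). lra.
  - specialize (Hq (1 / B)).
    replace (A - 2 * (1 / B) * P + (1 / B) ^ 2 * P * B) with (A - P / B) in Hq by (field; lra).
    assert (0 < B) by lra.
    apply Rmult_le_reg_r with (/ B); [apply Rinv_0_lt_compat; lra|].
    replace (A * B * / B) with A by (field; lra). unfold Rdiv in Hq. lra.
Qed.

(** The Korányi gap [|1 - u.v|]; on the unit sphere its square root is a
    metric, the property that lets the estimates along a tree branch add up. *)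

Definition kgap (n : nat) (u v : Vec) : R := Cmod (Csub Defs.C1 (inner n u v)).

Lemma kgap_nonneg (n : nat) (u v : Vec) : 0 <= kgap n u v.
Proof. apply Cmod_nonneg. Qed.

Lemma kgap_sym (n : nat) (u v : Vec) : kgap n u v = kgap n v u.
Proof.
  unfold kgap. rewrite (inner_conj n u v). destruct (inner n u v) as [x1 x2].
  unfold Cmod, Csub, Cadd, Copp, Cconj, Defs.C1; simpl. f_equal. ring.
Qed.

Lemma kgap_self (n : nat) (u : Vec) : fst (inner n u u) = 1 -> kgap n u u = 0.
Proof.
  intro H. unfold kgap. rewrite inner_self, H.
  unfold Cmod, Csub, Cadd, Copp, Defs.C1; cbn [fst snd].
  match goal with |- sqrt ?e = 0 => replace e with 0 by ring end. apply sqrt_0.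
Qed.

(* On the unit sphere, 1 - z.x = (1 - z.e) + (1 - e.x) + (z - e).(e - x), and by
   Cauchy-Schwarz |(z - e).(e - x)|^2 <= |z - e|^2 |e - x|^2 <= 4 gap(z,e) gap(e,x). *)
Lemma kgap_sqrt_triangle (n : nat) (z e x : Vec) :
  fst (inner n z z) = 1 -> fst (inner n e e) = 1 -> fst (inner n x x) = 1 ->
  sqrt (kgap n z x) <= sqrt (kgap n z e) + sqrt (kgap n e x).
Proof.
  intros Hz He Hx.
  set (d1 := fun j => Cadd (Cmul Defs.C1 (z j)) (Cmul (-1, 0) (e j))).
  set (d2 := fun j => Cadd (Cmul Defs.C1 (e j)) (Cmul (-1, 0) (x j))).
  pose proof (cauchy_schwarz n d1 d2) as CS.
  pose proof (inner_self_nonneg n d1) as N1.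
  pose proof (inner_self_nonneg n d2) as N2.
  unfold d1, d2 in *. rewrite !inner_lin in CS. rewrite inner_lin in N1, N2.
  rewrite (inner_conj n z e) in CS, N1. rewrite (inner_conj n e x) in CS, N2.
  rewrite (inner_self n e) in CS, N1, N2.
  rewrite (inner_self n z) in N1. rewrite (inner_self n x) in N2.
  rewrite He in CS, N1, N2. rewrite Hz in N1. rewrite Hx in N2.
  unfold kgap.
  destruct (inner n z e) as [x1 x2], (inner n e x) as [y1 y2], (inner n z x) as [z1 z2].
  unfold Cadd, Cmul, Cconj, Defs.C1 in CS, N1, N2; cbn [fst snd] in CS, N1, N2.
  set (a := Cmod (Csub Defs.C1 (x1, x2))). set (b := Cmod (Csub Defs.C1 (y1, y2))).
  assert (Ha0 : 0 <= a) by apply Cmod_nonneg. assert (Hb0 : 0 <= b) by apply Cmod_nonneg.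
  assert (Ha : 1 - x1 <= a).
  { apply Cmod_ge; [nra|]. unfold Csub, Cadd, Copp, Defs.C1; cbn [fst snd]. nra. }
  assert (Hb : 1 - y1 <= b).
  { apply Cmod_ge; [nra|]. unfold Csub, Cadd, Copp, Defs.C1; cbn [fst snd]. nra. }
  set (m := Cmod (x1 - z1 - 1 + y1, x2 - z2 + y2)).
  assert (Hm0 : 0 <= m) by apply Cmod_nonneg.
  pose proof (sqrt_pos a) as sa. pose proof (sqrt_pos b) as sb.
  pose proof (sqrt_sqrt a Ha0) as sa2. pose proof (sqrt_sqrt b Hb0) as sb2.
  assert (Hm : m <= 2 * sqrt a * sqrt b).
  { unfold m. apply Cmod_le; [nra|]. cbn [fst snd].
    replace ((2 * sqrt a * sqrt b) ^ 2) with (4 * (sqrt a * sqrt a) * (sqrt b * sqrt b))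
      by ring.
    rewrite sa2, sb2. nra. }
  assert (Ht : Cmod (Csub Defs.C1 (z1, z2)) <= a + b + m).
  { replace (Csub Defs.C1 (z1, z2)) with
      (Cadd (Cadd (Csub Defs.C1 (x1, x2)) (Csub Defs.C1 (y1, y2)))
            (x1 - z1 - 1 + y1, x2 - z2 + y2))
      by (unfold Csub, Cadd, Copp, Defs.C1; cbn [fst snd]; f_equal; ring).
    pose proof (Cmod_triangle (Csub Defs.C1 (x1, x2)) (Csub Defs.C1 (y1, y2))) as Hab.
    fold a b in Hab. eapply Rle_trans; [apply Cmod_triangle|]. fold m. lra. }
  rewrite <- (sqrt_pow2 (sqrt a + sqrt b)) by lra.
  apply sqrt_le_1; [apply Cmod_nonneg|nra|].
  replace ((sqrt a + sqrt b) ^ 2) with (sqrt a * sqrt a + sqrt b * sqrt b + 2 * sqrt a * sqrt b)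
    by ring.
  rewrite sa2, sb2. lra.
Qed.

Lemma vnorm_sq (n : nat) (u : Vec) : vnorm n u ^ 2 = fst (inner n u u).
Proof. unfold vnorm. rewrite pow2_sqrt; auto using inner_self_nonneg. Qed.

Lemma vnorm_nonneg (n : nat) (u : Vec) : 0 <= vnorm n u.
Proof. apply sqrt_pos. Qed.

Lemma vnorm_scale (n : nat) (c : Defs.C) (v : Vec) :
  vnorm n (vscale c v) = Cmod c * vnorm n v.
Proof.
  unfold vnorm. rewrite inner_scale, (inner_self n v).
  pose proof (inner_self_nonneg n v).
  destruct c as [c1 c2]. unfold Cmul, Cconj, Cmod; cbn [fst snd].
  rewrite <- sqrt_mult by nra. f_equal. ring.
Qed.

Lemma vnorm_scalR (n : nat) (t : R) (v : Vec) :
  0 <= t -> vnorm n (vscalR t v) = t * vnorm n v.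
Proof.
  intro Ht. unfold vscalR. rewrite vnorm_scale. f_equal.
  unfold Cmod, CofR; cbn [fst snd].
  replace (t ^ 2 + 0 ^ 2) with (t ^ 2) by ring. apply sqrt_pow2; auto.
Qed.

Definition dir (n : nat) (v : Vec) : Vec := vscalR (/ vnorm n v) v.

Lemma dir_unit (n : nat) (v : Vec) :
  0 < vnorm n v -> fst (inner n (dir n v) (dir n v)) = 1.
Proof.
  intro Hv. rewrite <- vnorm_sq. unfold dir. rewrite vnorm_scalR.
  - field. lra.
  - apply Rlt_le, Rinv_0_lt_compat; auto.
Qed.

Lemma dir_scale (n : nat) (t : R) (v : Vec) :
  0 < t -> 0 < vnorm n v -> dir n (vscalR t v) = dir n v.
Proof.
  intros Ht Hv. unfold dir. rewrite vnorm_scalR by lra.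
  apply functional_extensionality; intro j. unfold vscalR, vscale, CofR.
  destruct (v j). unfold Cmul; cbn [fst snd]. f_equal; field; lra.
Qed.

(* The Korányi gap between the directions of two vectors of the same length x,
   compared with the gap between the vectors themselves:
   1 - y.z / x^2 = ((1 - y.z) - (1 - x^2)) / x^2. *)
Lemma kgap_dir_bound (n : nat) (y z : Vec) (x : R) :
  vnorm n y = x -> vnorm n z = x -> 0 < x < 1 ->
  kgap n (dir n y) (dir n z) <= (kgap n y z + (1 - x ^ 2)) / x ^ 2.
Proof.
  intros Hy Hz Hx. unfold kgap, dir. rewrite Hy, Hz, inner_scalR.
  pose proof (Cmod_sq (Csub Defs.C1 (inner n y z))) as Hm.
  pose proof (Cmod_nonneg (Csub Defs.C1 (inner n y z))) as Hm0.
  set (m := Cmod (Csub Defs.C1 (inner n y z))) in *.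
  destruct (inner n y z) as [p1 p2].
  unfold Csub, Cadd, Copp, Defs.C1 in *; cbn [fst snd] in *.
  assert (Hx2 : 0 < x ^ 2) by nra.
  assert (Hd : 0 <= 1 - x ^ 2) by nra.
  assert (H1 : - (1 - p1) <= m) by nra.
  apply Cmod_le; cbn [fst snd].
  - apply Rmult_le_pos; [lra | apply Rlt_le, Rinv_0_lt_compat; lra].
  - replace ((1 + - (/ x * / x * p1)) ^ 2 + (0 + - (/ x * / x * p2)) ^ 2)
      with ((((1 - p1) - (1 - x ^ 2)) ^ 2 + p2 ^ 2) / (x ^ 2) ^ 2) by (field; lra).
    replace (((m + (1 - x ^ 2)) / x ^ 2) ^ 2)
      with ((m + (1 - x ^ 2)) ^ 2 / (x ^ 2) ^ 2) by (field; lra).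
    unfold Rdiv. apply Rmult_le_compat_r; [apply Rlt_le, Rinv_0_lt_compat; nra|].
    replace (1 + - p1) with (1 - p1) in Hm by ring.
    replace (0 + - p2) with (- p2) in Hm by ring. nra.
Qed.

(** Radii: the Bergman sphere [S_r] is the Euclidean sphere of radius [tanh r]. *)

Definition radius (r : R) : R := (exp (2 * r) - 1) / (exp (2 * r) + 1).

Lemma exp_gt1 (a : R) : 0 < a -> 1 < exp a.
Proof. intro. rewrite <- exp_0. apply exp_increasing. lra. Qed.

Lemma exp_le_mono (a b : R) : a <= b -> exp a <= exp b.
Proof. intros [H|H]; [left; apply exp_increasing; auto | subst; lra]. Qed.

Lemma one_minus_radius (r : R) : 1 - radius r = 2 / (exp (2 * r) + 1).
Proof. unfold radius. pose proof (exp_pos (2 * r)). field. lra. Qed.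

Lemma radius_range (r : R) : 0 < r -> 0 < radius r < 1.
Proof.
  intro Hr. pose proof (exp_gt1 (2 * r) ltac:(lra)). pose proof (one_minus_radius r).
  unfold radius in *. split; [apply Rdiv_lt_0_compat; lra|].
  assert (0 < 2 / (exp (2 * r) + 1)) by (apply Rdiv_lt_0_compat; lra). lra.
Qed.

Lemma radius_increasing (a b : R) : a < b -> radius a < radius b.
Proof.
  intro Hab. pose proof (one_minus_radius a); pose proof (one_minus_radius b).
  assert (exp (2 * a) < exp (2 * b)) by (apply exp_increasing; lra).
  pose proof (exp_pos (2 * a)).
  assert (2 / (exp (2 * b) + 1) < 2 / (exp (2 * a) + 1)).
  { unfold Rdiv. apply Rmult_lt_compat_l; [lra|]. apply Rinv_lt_contravar; nra. }
  lra.
Qed.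

Lemma radius_artanh (f : R) : 0 <= f < 1 -> radius (/ 2 * ln ((1 + f) / (1 - f))) = f.
Proof.
  intro Hf. unfold radius.
  replace (2 * (/ 2 * ln ((1 + f) / (1 - f)))) with (ln ((1 + f) / (1 - f))) by field.
  rewrite exp_ln by (apply Rdiv_lt_0_compat; lra). field. lra.
Qed.

Lemma vnorm_vzero (n : nat) : vnorm n vzero = 0.
Proof.
  unfold vnorm. replace (fst (inner n vzero vzero)) with 0; [apply sqrt_0|].
  unfold inner, vzero. induction n; simpl; [reflexivity|].
  unfold Cadd, Cmul, Cconj, C0 in *; simpl in *. rewrite <- IHn. ring.
Qed.

Lemma bdist0 (n : nat) (z : Vec) :
  bdist n vzero z = / 2 * ln ((1 + vnorm n z) / (1 - vnorm n z)).
Proof.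
  unfold bdist, phi. destruct (Req_EM_T (vnorm n vzero) 0) as [_|Hc].
  - rewrite vnorm_scale. replace (Cmod (Copp Defs.C1)) with 1; [now rewrite Rmult_1_l|].
    unfold Cmod, Copp, Defs.C1; cbn [fst snd].
    match goal with |- _ = sqrt ?e => replace e with 1 by ring end. symmetry; apply sqrt_1.
  - exfalso. apply Hc, vnorm_vzero.
Qed.

Lemma ball_norm_radius (n : nat) (z : Vec) :
  inBall n z -> vnorm n z = radius (bdist n vzero z).
Proof.
  intro Hb. unfold inBall in Hb. pose proof (vnorm_nonneg n z).
  rewrite bdist0, radius_artanh; lra.
Qed.

Lemma sphere_norm (n : nat) (r : R) (z : Vec) : sphere n r z -> vnorm n z = radius r.
Proof. intros [Hb Hd]. rewrite <- Hd. apply ball_norm_radius, Hb. Qed.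

Lemma sphere_pos (n : nat) (r : R) (z : Vec) : 0 < r -> sphere n r z -> 0 < vnorm n z.
Proof. intros Hr Hs. rewrite (sphere_norm n r z Hs). apply radius_range, Hr. Qed.

(* The radial projection is well defined: the point [radius r * dir v] lies on [S_r]. *)
Lemma Pr_spec (n : nat) (r : R) (v : Vec) : 0 < r -> 0 < vnorm n v ->
  sphere n r (Pr n r v) /\ exists t, 0 < t /\ Pr n r v = vscalR t v.
Proof.
  intros Hr Hv. unfold Pr. apply epsilon_spec.
  pose proof (radius_range r Hr) as Hx. set (x := radius r) in *.
  assert (Ht : 0 < x / vnorm n v) by (apply Rdiv_lt_0_compat; lra).
  exists (vscalR (x / vnorm n v) v). split; [|exists (x / vnorm n v); auto].
  assert (Hn : vnorm n (vscalR (x / vnorm n v) v) = x).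
  { rewrite vnorm_scalR by lra. field. lra. }
  unfold sphere, inBall. rewrite bdist0, Hn. split; [lra|].
  unfold x, radius. set (E := exp (2 * r)). assert (1 < E) by (apply exp_gt1; lra).
  replace ((1 + (E - 1) / (E + 1)) / (1 - (E - 1) / (E + 1))) with E by (field; lra).
  unfold E. rewrite ln_exp. field.
Qed.

Lemma one_minus_radius_le (r d : R) : r <= d -> 1 - radius d <= 2 * / exp (2 * r).
Proof.
  intro Hrd. rewrite one_minus_radius. unfold Rdiv. apply Rmult_le_compat_l; [lra|].
  pose proof (exp_pos (2 * r)). pose proof (exp_le_mono (2 * r) (2 * d) ltac:(lra)).
  apply Rinv_le_contravar; lra.
Qed.

Lemma one_minus_radius_ge (r l : R) : 0 <= r -> 0 < l ->
  exp (- l) * / exp (2 * r) <= 1 - radius (r + l / 2).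
Proof.
  intros Hr Hl. rewrite one_minus_radius.
  replace (exp (2 * (r + l / 2))) with (exp (2 * r) * / exp (- l))
    by (rewrite exp_Ropp, Rinv_inv, <- exp_plus; f_equal; field).
  pose proof (exp_le_mono 0 (2 * r) ltac:(lra)) as Ha. rewrite exp_0 in Ha.
  assert (Hq : exp (- l) < 1) by (rewrite <- exp_0; apply exp_increasing; lra).
  pose proof (exp_pos (- l)).
  set (a := exp (2 * r)) in *. set (q := exp (- l)) in *.
  replace (2 / (a * / q + 1)) with (2 * q / (a + q)) by (field; split; lra).
  apply (Rmult_le_reg_r (a * (a + q))); [nra|].
  replace (q * / a * (a * (a + q))) with (q * (a + q)) by (field; lra).
  replace (2 * q / (a + q) * (a * (a + q))) with (2 * q * a) by (field; lra). nra.
Qed.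

Lemma phi_identity (n : nat) (a w : Vec) : 0 < vnorm n a < 1 ->
  (1 - fst (inner n w a)) ^ 2 + snd (inner n w a) ^ 2 <> 0 ->
  vnorm n (phi n a w) ^ 2 * ((1 - fst (inner n w a)) ^ 2 + snd (inner n w a) ^ 2)
  = ((1 - fst (inner n w a)) ^ 2 + snd (inner n w a) ^ 2)
    - (1 - vnorm n a ^ 2) * (1 - vnorm n w ^ 2).
Proof.
  intros Ha HD. unfold phi. destruct (Req_EM_T (vnorm n a) 0) as [e|_]; [lra|].
  set (c := Cinv (Csub Defs.C1 (inner n w a))).
  set (k := Cmul (inner n w a) (Cinv (inner n a a))).
  remember (sqrt (1 - vnorm n a ^ 2)) as s eqn:Hs.
  set (al := Cmul c (Cadd (Csub Defs.C1 k) (Cmul (s, 0) k))).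
  set (be := Cmul c (- s, 0)).
  assert (Hf : vscale c (vsub (vsub a (vscale k a)) (vscalR s (vsub w (vscale k a))))
               = fun j => Cadd (Cmul al (a j)) (Cmul be (w j))).
  { apply functional_extensionality; intro j.
    unfold al, be, vscale, vsub, vscalR, vscale, CofR.
    destruct (a j), (w j), c, k. unfold Cmul, Csub, Cadd, Copp, Defs.C1; cbn [fst snd].
    f_equal; ring. }
  rewrite Hf, vnorm_sq, inner_lin.
  unfold al, be, c, k. clear al be c k Hf.
  rewrite (vnorm_sq n w), (inner_conj n w a), (inner_self n a), (inner_self n w).
  rewrite <- (vnorm_sq n a) in *. rewrite <- (vnorm_sq n w).
  assert (HA : vnorm n a ^ 2 = 1 - s * s) by (rewrite Hs, sqrt_sqrt; [ring | nra]).
  assert (Hs1 : 1 - s * s <> 0) by (rewrite <- HA; nra).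
  clear Hs. rewrite HA in *.
  destruct (inner n w a) as [p1 p2]. cbn [fst snd] in *.
  unfold Cinv, Cmul, Csub, Cadd, Copp, Cconj, Defs.C1; cbn [fst snd].
  field. split; auto.
  replace ((1 + - p1) ^ 2 + (- p2) ^ 2) with ((1 - p1) ^ 2 + p2 ^ 2) by ring. auto.
Qed.

(* Two points of the sphere S_r at Bergman distance < s have Korányi gap
   O(1 - |y|^2): the identity above gives |1 - y.z|^2 (1 - tanh(s)^2) <= (1 - x^2)^2. *)
Lemma sphere_gap_bound (n : nat) (r s : R) (y z : Vec) :
  0 < r -> 0 < s -> sphere n r y -> sphere n r z -> bdist n z y < s ->
  kgap n y z <= / (1 - radius s ^ 2) * (1 - radius r ^ 2).
Proof.
  intros Hr Hs Hy Hz Hd.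
  pose proof (radius_range r Hr) as Hx. pose proof (radius_range s Hs) as Htau.
  pose proof (sphere_norm n r y Hy) as Hny. pose proof (sphere_norm n r z Hz) as Hnz.
  set (x := radius r) in *. set (tau := radius s) in *.
  assert (Hxx : 0 < 1 - x ^ 2) by nra.
  assert (HMc : 1 <= / (1 - tau ^ 2)).
  { rewrite <- Rinv_1. apply Rinv_le_contravar; nra. }
  set (Mc := / (1 - tau ^ 2)) in *.
  assert (HMc1 : Mc * (1 - tau ^ 2) = 1) by (unfold Mc; field; nra).
  unfold kgap. apply Cmod_le; [nra|].
  replace (fst (Csub Defs.C1 (inner n y z)) ^ 2 + snd (Csub Defs.C1 (inner n y z)) ^ 2)
    with ((1 - fst (inner n y z)) ^ 2 + snd (inner n y z) ^ 2)
    by (unfold Csub, Cadd, Copp, Defs.C1; cbn [fst snd]; ring).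
  set (D := (1 - fst (inner n y z)) ^ 2 + snd (inner n y z) ^ 2).
  assert (HD0 : 0 <= D) by (unfold D; pose proof (pow2_ge_0 (1 - fst (inner n y z))); pose proof (pow2_ge_0 (snd (inner n y z))); lra).
  destruct (Req_dec D 0) as [HD|HD]; [rewrite HD; apply pow2_ge_0|].
  pose proof (phi_identity n z y ltac:(lra) HD) as Hid. fold D in Hid.
  rewrite Hny, Hnz in Hid.
  set (f := vnorm n (phi n z y)) in *.
  assert (Hf0 : 0 <= f) by apply vnorm_nonneg.
  assert (Hf1 : f < 1).
  { assert (f ^ 2 < 1); [|nra].
    apply (Rmult_lt_reg_r D); [lra|]. rewrite Hid.
    assert (0 < (1 - x ^ 2) * (1 - x ^ 2)) by (apply Rmult_lt_0_compat; lra). lra. }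
  (* |phi_z(y)| = tanh d(z, y) < tanh s *)
  assert (Hft : f < tau).
  { unfold bdist in Hd. fold f in Hd. unfold tau.
    rewrite <- (radius_artanh f) by lra. apply radius_increasing, Hd. }
  assert (HDt : D * (1 - tau ^ 2) <= (1 - x ^ 2) ^ 2).
  { assert (f ^ 2 <= tau ^ 2) by nra.
    assert (0 <= D * (tau ^ 2 - f ^ 2)) by (apply Rmult_le_pos; lra). nra. }
  assert (D <= Mc * (1 - x ^ 2) ^ 2).
  { replace D with (Mc * (D * (1 - tau ^ 2)))
      by (transitivity (D * (Mc * (1 - tau ^ 2))); [ring | rewrite HMc1; ring]).
    apply Rmult_le_compat_l; nra. }
  nra.
Qed.

Definition step_const (l : R) : R :=
  (/ (1 - radius (2 * l) ^ 2) + 1) * 4 * (exp (2 * l) / (exp (2 * l) - 1)) ^ 2.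

Lemma step_const_pos (l : R) : 0 < l -> 0 < step_const l.
Proof.
  intro Hl. unfold step_const.
  pose proof (radius_range (2 * l) ltac:(lra)) as Ht.
  pose proof (exp_gt1 (2 * l) ltac:(lra)).
  assert (0 < / (1 - radius (2 * l) ^ 2)) by (apply Rinv_0_lt_compat; nra).
  assert (0 < exp (2 * l) / (exp (2 * l) - 1)) by (apply Rdiv_lt_0_compat; lra).
  apply Rmult_lt_0_compat; [lra | apply pow_lt; auto].
Qed.

(* (1 - tanh^2 r) / tanh^2 r = 4 e^{2r} / (e^{2r} - 1)^2 = O(e^{-2r}), uniformly for r >= l. *)
Lemma radius_defect_ratio (l r : R) : 0 < l <= r ->
  (1 - radius r ^ 2) / radius r ^ 2
  <= 4 * (exp (2 * l) / (exp (2 * l) - 1)) ^ 2 * / exp (2 * r).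
Proof.
  intro Hlr. unfold radius.
  set (E := exp (2 * r)). set (E1 := exp (2 * l)).
  assert (HE1 : 1 < E1) by (apply exp_gt1; lra).
  assert (HEE1 : E1 <= E) by (apply exp_le_mono; lra).
  replace ((1 - ((E - 1) / (E + 1)) ^ 2) / ((E - 1) / (E + 1)) ^ 2)
    with (4 * (E / (E - 1)) ^ 2 * / E) by (field; lra).
  apply Rmult_le_compat_r; [apply Rlt_le, Rinv_0_lt_compat; lra|].
  apply Rmult_le_compat_l; [lra|].
  (* t / (t - 1) decreases for t > 1 *)
  assert (Hmono : E / (E - 1) <= E1 / (E1 - 1)).
  { apply (Rmult_le_reg_r ((E - 1) * (E1 - 1))); [nra|].
    replace (E / (E - 1) * ((E - 1) * (E1 - 1))) with (E * (E1 - 1)) by (field; lra).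
    replace (E1 / (E1 - 1) * ((E - 1) * (E1 - 1))) with (E1 * (E - 1)) by (field; lra).
    nra. }
  assert (0 <= E / (E - 1)) by (apply Rlt_le, Rdiv_lt_0_compat; lra). nra.
Qed.

Lemma kgap_dir_close (n : nat) (l r : R) (y z : Vec) :
  0 < l <= r -> sphere n r y -> sphere n r z -> bdist n z y < 2 * l ->
  kgap n (dir n y) (dir n z) <= step_const l * / exp (2 * r).
Proof.
  intros Hlr Hy Hz Hd.
  pose proof (radius_range r ltac:(lra)) as Hx.
  pose proof (radius_range (2 * l) ltac:(lra)) as Htau.
  pose proof (sphere_gap_bound n r (2 * l) y z ltac:(lra) ltac:(lra) Hy Hz Hd) as Hgap.
  pose proof (kgap_dir_bound n y z (radius r)
                (sphere_norm n r y Hy) (sphere_norm n r z Hz) Hx) as Hdir.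
  pose proof (radius_defect_ratio l r Hlr) as Hratio.
  set (x := radius r) in *. set (Mc := / (1 - radius (2 * l) ^ 2)) in *.
  assert (HMc : 0 < Mc) by (apply Rinv_0_lt_compat; nra).
  assert (Hx2 : 0 < x ^ 2) by nra.
  eapply Rle_trans; [exact Hdir|].
  apply Rle_trans with ((Mc + 1) * ((1 - x ^ 2) / x ^ 2)).
  - replace ((Mc + 1) * ((1 - x ^ 2) / x ^ 2)) with ((Mc * (1 - x ^ 2) + (1 - x ^ 2)) / x ^ 2)
      by (field; lra).
    unfold Rdiv. apply Rmult_le_compat_r; [apply Rlt_le, Rinv_0_lt_compat|]; lra.
  - unfold step_const. fold Mc. rewrite !Rmult_assoc.
    apply Rmult_le_compat_l; [lra|]. rewrite <- Rmult_assoc. exact Hratio.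
Qed.

Lemma sqrt_exp_bound (K y D : R) :
  0 < K -> 0 <= D -> D <= K * / exp (2 * y) -> sqrt D <= sqrt K * exp (- y).
Proof.
  intros HK HD H.
  assert (He : exp (- y) ^ 2 = / exp (2 * y)).
  { rewrite <- exp_Ropp. replace (exp (- y) ^ 2) with (exp (- y) * exp (- y)) by ring.
    rewrite <- exp_plus. f_equal. ring. }
  rewrite <- (sqrt_pow2 (sqrt K * exp (- y)))
    by (apply Rmult_le_pos; [apply sqrt_pos | apply Rlt_le, exp_pos]).
  apply sqrt_le_1; auto; [nra|].
  replace ((sqrt K * exp (- y)) ^ 2) with ((sqrt K * sqrt K) * exp (- y) ^ 2) by ring.
  rewrite sqrt_sqrt, He by lra. exact H.
Qed.

(* Membership in a Korányi region is controlled by the radial defect 1 - |w| and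
   the gap between directions: with s = |w|, 1 - s X = (1 - s) + s (1 - X). *)
Lemma Vreg_of_gap (n : nat) (w c : Vec) :
  0 < vnorm n w < 1 ->
  Cmod (Csub Defs.C1 (inner n w (dir n c)))
  <= (1 - vnorm n w) + kgap n (dir n c) (dir n w).
Proof.
  intro Hw. rewrite kgap_sym. unfold kgap.
  replace w with (vscalR (vnorm n w) (dir n w)) at 1.
  2:{ apply functional_extensionality; intro k. unfold dir, vscalR, vscale, CofR.
      destruct (w k). unfold Cmul; cbn [fst snd]. f_equal; field; lra. }
  rewrite inner_scalR_l.
  pose proof (Cmod_sq (Csub Defs.C1 (inner n (dir n w) (dir n c)))) as Hm.
  pose proof (Cmod_nonneg (Csub Defs.C1 (inner n (dir n w) (dir n c)))) as Hm0.
  set (m := Cmod (Csub Defs.C1 (inner n (dir n w) (dir n c)))) in *.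
  set (s := vnorm n w) in *.
  destruct (inner n (dir n w) (dir n c)) as [X1 X2].
  unfold Csub, Cadd, Copp, Defs.C1 in *; cbn [fst snd] in *.
  assert (H1 : 1 - X1 <= m) by nra.
  assert (H2 : s * (1 - X1) <= m) by nra.
  apply Cmod_le; cbn [fst snd]; [lra|].
  replace ((1 + - (s * X1)) ^ 2 + (0 + - (s * X2)) ^ 2)
    with ((1 - s) ^ 2 + 2 * (1 - s) * (s * (1 - X1)) + s ^ 2 * m ^ 2) by (rewrite Hm; ring).
  assert (s ^ 2 * m ^ 2 <= m ^ 2) by (assert (s ^ 2 <= 1) by nra; nra).
  nra.
Qed.

Section Tree.

Variable n : nat.
Variable T : BergmanTree n.

Let l := lam T.
Let K := step_const l.
Let q := exp (- l).

Lemma tree_params_pos : 0 < l /\ 0 < K /\ 0 < q < 1.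
Proof.
  pose proof (lam_pos n T) as Hl. fold l in Hl.
  split; [exact Hl|]. split; [apply step_const_pos, Hl|].
  split; [apply exp_pos|]. unfold q. rewrite <- exp_0. apply exp_increasing. lra.
Qed.

Lemma level_pos (N : nat) : (1 <= N)%nat -> 0 < l * INR N.
Proof.
  intro HN. pose proof tree_params_pos as [Hl _].
  apply Rmult_lt_0_compat; [exact Hl | apply lt_0_INR; lia].
Qed.

Lemma zc_pos (N j : nat) : (1 <= N)%nat -> (j < J T N)%nat -> 0 < vnorm n (zc T N j).
Proof. intros HN Hj. apply (sphere_pos n (l * INR N)); [apply level_pos | apply zc_sphere]; auto. Qed.

Lemma center_dir (N j : nat) : (1 <= N)%nat -> (j < J T N)%nat ->
  sphere n (l * (INR N + / 2)) (center T (Nd N j)) /\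
  dir n (center T (Nd N j)) = dir n (zc T N j).
Proof.
  intros HN Hj. pose proof tree_params_pos as [Hl _].
  assert (Hr : 0 < l * (INR N + / 2)) by (apply Rmult_lt_0_compat; [|pose proof (pos_INR N)]; lra).
  destruct (Pr_spec n _ _ Hr (zc_pos N j HN Hj)) as [Hs [t [Ht Hc]]].
  split; [exact Hs|]. simpl. fold l. rewrite Hc. apply dir_scale; auto using zc_pos.
Qed.

Lemma box_direction_gap (N j : nat) (v : Vec) :
  (1 <= N)%nat -> (j < J T N)%nat -> 0 < vnorm n v ->
  Qs T N j (Pr n (l * INR N) v) ->
  kgap n (dir n (zc T N j)) (dir n v) <= K * / exp (2 * (l * INR N)).
Proof.
  intros HN Hj Hv HQ. pose proof tree_params_pos as [Hl _].
  destruct (Pr_spec n _ v (level_pos N HN) Hv) as [_ [t [Ht Hy]]].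
  destruct (Q_upper n T N j HN Hj _ HQ) as [Hsy Hd].
  assert (Hlr : 0 < l <= l * INR N).
  { split; [exact Hl|]. assert (1 <= INR N) by (apply (le_INR 1); auto). nra. }
  rewrite kgap_sym.
  replace (dir n v) with (dir n (Pr n (l * INR N) v)) by (rewrite Hy; apply dir_scale; auto).
  apply kgap_dir_close; auto. apply zc_sphere; auto.
Qed.

(* Summing the one-step estimates along a branch with the Korányi triangle
   inequality: the directions of the points z along a branch starting at (N, j)
   stay in a Korányi ball of radius O(e^{-2lN}). *)
Lemma branch_gap (N j : nat) (b : node) :
  (1 <= N)%nat -> (j < J T N)%nat -> desc T (Nd N j) b ->
  exists M i, b = Nd M i /\ (N <= M)%nat /\ (i < J T M)%nat /\
    sqrt (kgap n (dir n (zc T N j)) (dir n (zc T M i)))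
    <= sqrt K * (exp (- (l * INR N)) - exp (- (l * INR M))) / (1 - q).
Proof.
  intros HN Hj Hd. unfold desc in Hd. apply clos_rt_rtn1 in Hd.
  pose proof tree_params_pos as [Hl [HK Hq]].
  induction Hd as [|y z Hc Hd IH].
  - exists N, j. repeat split; auto.
    rewrite kgap_self by (apply dir_unit, zc_pos; auto).
    rewrite sqrt_0, Rminus_diag. unfold Rdiv. lra.
  - destruct IH as [M [i [-> [HNM [Hi IH]]]]].
    destruct Hc as [_ [Hvz Hc]]. destruct z as [|M' i']; [contradiction|].
    destruct Hc as [-> HQ]. destruct Hvz as [_ Hi'].
    exists (S M), i'. repeat split; auto.
    assert (HM : (1 <= M)%nat) by lia.
    destruct (center_dir (S M) i' ltac:(lia) Hi') as [Hsc Hdc].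
    assert (Hcp : 0 < vnorm n (center T (Nd (S M) i'))).
    { eapply sphere_pos; [|exact Hsc]. pose proof (pos_INR (S M)). nra. }
    pose proof (box_direction_gap M i _ HM Hi Hcp HQ) as Hstep. rewrite Hdc in Hstep.
    pose proof (sqrt_exp_bound _ _ _ HK (kgap_nonneg _ _ _) Hstep) as Hs.
    pose proof (kgap_sqrt_triangle n (dir n (zc T N j)) (dir n (zc T M i))
                  (dir n (zc T (S M) i')) (dir_unit n _ (zc_pos N j HN Hj))
                  (dir_unit n _ (zc_pos M i HM Hi))
                  (dir_unit n _ (zc_pos (S M) i' ltac:(lia) Hi'))) as Htri.
    assert (He : exp (- (l * INR (S M))) = exp (- (l * INR M)) * q).
    { unfold q. rewrite <- exp_plus. f_equal. rewrite S_INR. ring. }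
    rewrite He. eapply Rle_trans; [exact Htri|].
    apply Rle_trans with (sqrt K * (exp (- (l * INR N)) - exp (- (l * INR M))) / (1 - q)
                          + sqrt K * exp (- (l * INR M))); [lra|].
    right. field. lra.
Qed.

(* Every point w of a box below (N, j) points in a direction O(e^{-2lN})-close
   to z^N_j: the branch estimate followed by one more step. *)
Lemma box_gap (N j : nat) (b : node) (w : Vec) :
  (1 <= N)%nat -> (j < J T N)%nat -> desc T (Nd N j) b -> Kbox T b w ->
  inBall n w /\ l * INR N <= bdist n vzero w /\
  kgap n (dir n (zc T N j)) (dir n w) <= K / (1 - q) ^ 2 * / exp (2 * (l * INR N)).
Proof.
  intros HN Hj Hd Hw. pose proof tree_params_pos as [Hl [HK Hq]].
  destruct (branch_gap N j b HN Hj Hd) as [M [i [-> [HNM [Hi Hbranch]]]]].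
  destruct Hw as [Hwb [HwM [_ HQ]]]. fold l in HwM, HQ.
  assert (HM : (1 <= M)%nat) by lia.
  assert (HlN : l * INR N <= l * INR M) by (apply Rmult_le_compat_l; [lra | apply le_INR; lia]).
  pose proof (level_pos M HM) as HlM.
  assert (Hwp : 0 < vnorm n w).
  { rewrite (ball_norm_radius n w Hwb). apply radius_range. lra. }
  split; [exact Hwb|]. split; [lra|].
  pose proof (box_direction_gap M i w HM Hi Hwp HQ) as Hstep.
  pose proof (sqrt_exp_bound _ _ _ HK (kgap_nonneg _ _ _) Hstep) as Hs.
  pose proof (kgap_sqrt_triangle n (dir n (zc T N j)) (dir n (zc T M i)) (dir n w)
                (dir_unit n _ (zc_pos N j HN Hj)) (dir_unit n _ (zc_pos M i HM Hi))
                (dir_unit n _ Hwp)) as Htri.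
  set (eM := exp (- (l * INR M))) in *. set (eN := exp (- (l * INR N))) in *.
  assert (HeM : 0 < eM) by apply exp_pos.
  assert (HsK : 0 < sqrt K) by (apply sqrt_lt_R0; auto).
  (* the geometric series of the branch dominates the last step *)
  assert (Hroot : sqrt (kgap n (dir n (zc T N j)) (dir n w)) <= sqrt K * eN / (1 - q)).
  { eapply Rle_trans; [exact Htri|].
    apply Rle_trans with (sqrt K * (eN - eM) / (1 - q) + sqrt K * eM / (1 - q)).
    - apply Rplus_le_compat; [exact Hbranch|]. eapply Rle_trans; [exact Hs|].
      unfold Rdiv. rewrite <- (Rmult_1_r (sqrt K * eM)) at 1.
      apply Rmult_le_compat_l; [nra|]. rewrite <- Rinv_1. apply Rinv_le_contravar; lra.
    - right. field. lra. }
  assert (HeN : eN ^ 2 = / exp (2 * (l * INR N))).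
  { unfold eN. rewrite <- exp_Ropp. replace (exp (- (l * INR N)) ^ 2)
      with (exp (- (l * INR N)) * exp (- (l * INR N))) by ring.
    rewrite <- exp_plus. f_equal. ring. }
  rewrite <- HeN.
  pose proof (kgap_nonneg n (dir n (zc T N j)) (dir n w)) as Hg0.
  set (g := kgap n (dir n (zc T N j)) (dir n w)) in *.
  rewrite <- (sqrt_sqrt g Hg0).
  replace (K / (1 - q) ^ 2 * eN ^ 2) with ((sqrt K * eN / (1 - q)) * (sqrt K * eN / (1 - q)))
    by (rewrite <- (sqrt_sqrt K) at 3 by lra; field; lra).
  pose proof (sqrt_pos g). apply Rmult_le_compat; auto.
Qed.

End Tree.

Theorem lemma2p4 (n : nat) (T : BergmanTree n) :
  exists rho : R, 0 < rho /\
    forall alpha : node, valid T alpha -> alpha <> Root ->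
      forall beta : node, desc T alpha beta ->
        forall w : Vec, Kbox T beta w -> Vreg n rho (center T alpha) w.
Proof.
  pose proof (tree_params_pos n T) as [Hl [HK Hq]].
  set (l := lam T) in *. set (q := exp (- l)) in *. set (G := step_const l / (1 - q) ^ 2).
  assert (HG : 0 < G) by (apply Rdiv_lt_0_compat; nra).
  exists ((2 + G) / q). split; [apply Rdiv_lt_0_compat; lra|].
  intros alpha Hva Hne beta Hd w Hw.
  destruct alpha as [|N j]; [contradiction|]. destruct Hva as [HN Hj].
  destruct (box_gap n T N j beta w HN Hj Hd Hw) as [Hwb [Hdw Hgap]]. fold l q G in Hdw, Hgap.
  destruct (center_dir n T N j HN Hj) as [Hsc Hdc]. fold l in Hsc.
  pose proof (level_pos n T N HN) as HlN. fold l in HlN.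
  pose proof (ball_norm_radius n w Hwb) as Hnw.
  assert (Hw0 : 0 < vnorm n w) by (rewrite Hnw; apply radius_range; lra).
  split; [exact Hwb|].
  eapply Rle_trans; [apply (Vreg_of_gap n w); unfold inBall in Hwb; lra|].
  rewrite Hdc, (sphere_norm n _ _ Hsc), Hnw.
  replace (l * (INR N + / 2)) with (l * INR N + l / 2) by field.
  pose proof (one_minus_radius_le _ _ Hdw) as Hw1.
  pose proof (one_minus_radius_ge (l * INR N) l ltac:(lra) Hl) as Hc1. fold q in Hc1.
  set (a := exp (2 * (l * INR N))) in *.
  assert (Ha : 0 < a) by apply exp_pos.
  apply Rle_trans with ((2 + G) / q * (q * / a)).
  - replace ((2 + G) / q * (q * / a)) with (2 * / a + G * / a) by (field; split; lra).
    lra.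
  - apply Rmult_le_compat_l; [apply Rlt_le, Rdiv_lt_0_compat|]; lra.
Qed.
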